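(* Let $n\in\mathbf{N}$ and $A\subset[n]$ have property P. For $a\in A\cap[1,\frac n2]$ let $p_a\geqslant0$ be the unique integer with $2^{p_a}a\in(\frac n4,\frac n2]$, let $B_{\frac12}=\{2^{p_a}a:a\in A\cap[1,\frac n2]\}$ and $B^{i(3)}_{\frac12}=B_{\frac12}\cap(i+3\mathbf{Z})$. Write $U=A\cap(\frac n2,n]\cap(1+3\mathbf{Z})$ and $A_{(\frac23,1]}=A\cap(\frac{2n}{3},n]$. Suppose $|U|\geqslant\frac n{12}+3$. Then $$\left|B^{2(3)}_{\frac12}\right|\leqslant\frac n{12}+2-\frac{|U|}{2},\qquad \left|B^{1(3)}_{\frac12}\right|\leqslant\frac n{10}+2-\frac{2|U|}{5}.$$ Moreover, if $\big(A_{(\frac23,1]}+A_{(\frac23,1]}\big)\cap4\mathbf{Z}$ contains an arithmetic progression of size at least $\frac{|A_{(\frac23,1]}|}{2}-1$, then either $|A_{(\frac23,1]}|\leqslant\frac n9+4$ or $$\left|B^{1(3)}_{\frac12}\right|\leqslant\frac{11n}{90}+4-\frac{2|U|}{5}-\frac{|A_{(\frac23,1]}|}{6}.$$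
   Context: A set $A\subset\mathbf{N}$ has property P if there are no $x,y,z\in A$ (not necessarily distinct $x,y$) with $z<x$, $z<y$ and $z\mid x+y$. Intervals denote sets of integers. *)

From mathcomp Require Import all_boot all_order all_algebra.
Set Implicit Arguments. Unset Strict Implicit. Unset Printing Implicit Defensive.
Import Order.TTheory GRing.Theory Num.Theory.

Definition subset_n (n : nat) (A : pred nat) : Prop :=
  forall x, A x -> (1 <= x) && (x <= n).

Definition card_n (n : nat) (S : pred nat) : nat := count S (iota 1 n).

Definition propP (A : pred nat) : Prop :=
  ~ exists x y z, [/\ A x, A y, A z & [/\ z < x, z < y & z %| x + y]].

(* B_{1/2} = { 2^{p_a} a : a in A cap [1, n/2] }, where p_a >= 0 is the unique
   integer with 2^{p_a} a in (n/4, n/2].  Membership of b: b = 2^p a for some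
   such a and some p with 2^p a in (n/4, n/2] (p is then p_a by uniqueness). *)
Definition B_half (n : nat) (A : pred nat) : pred nat := fun b =>
  [&& n < 4 * b, 2 * b <= n &
   has (fun a => [&& A a, 1 <= a, 2 * a <= n &
                    [exists p : 'I_b.+1, 2 ^ p * a == b]]) (iota 1 n)].

Definition B_half_mod3 (n : nat) (A : pred nat) (i : nat) : pred nat :=
  fun b => B_half n A b && (b %% 3 == i %% 3).

Definition U_set (n : nat) (A : pred nat) : pred nat :=
  fun x => [&& A x, n < 2 * x, x <= n & x %% 3 == 1].

Definition A_top (n : nat) (A : pred nat) : pred nat :=
  fun x => [&& A x, 2 * n < 3 * x & x <= n].

Definition sumset (S : pred nat) (s : nat) : Prop :=
  exists x y, [/\ S x, S y & x + y = s].

Definition contains_AP (T : nat -> Prop) (m : nat) : Prop :=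
  exists a d, 0 < d /\ forall k, k < m -> T (a + k * d).

(* Every [b] in B_{1/2} is a multiple of some [a] in [A] with [2a <= n], so by
   property P no multiple of [b] is a sum of two elements of [A] above [n/2].
   Hence [2b], [4b] and [5b] avoid [U], [U + U] while lying in the same residue
   classes (mod 6, 12 and 15 respectively) as the relevant parts of [U] and
   [U + U]; counting these classes, with [|X + Y| >= |X| + |Y| - 1], gives the
   first two bounds.  For the third, the quarters of the progression are numbers
   in (n/3, n/2] outside B_{1/2} with common difference 1 or 2, so a third of
   them are 1 mod 3, and those above [2n/5] can join B^{1(3)}_{1/2} in the count
   of multiples of 5. *)

From mathcomp Require Import all_boot all_order all_algebra.
From mathcomp Require Import zify lra.
Set Implicit Arguments. Unset Strict Implicit. Unset Printing Implicit Defensive.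

Section Counting.

Implicit Types (s t l : seq nat).

Lemma size_le_count l t (R : pred nat) :
  uniq l -> (forall y, y \in l -> (y \in t) && R y) -> size l <= count R t.
Proof.
move=> ul lR; rewrite -size_filter; apply: uniq_leq_size => // y yl.
by rewrite mem_filter; case/andP: (lR y yl) => -> ->.
Qed.

Lemma count_split s (P Q : pred nat) :
  count P s = count (predI P Q) s + count (predI P (predC Q)) s.
Proof. by elim: s => //= x s ->; case: (P x); case: (Q x) => /=; lia. Qed.

Lemma count_mod_partition s (P : pred nat) m : 0 < m ->
  count P s = \sum_(i < m) count (fun x => P x && (x %% m == i)) s.
Proof.
move=> m_gt0; elim: s => [|x s IH] /=; first by rewrite big1.
rewrite big_split /= -IH; congr (_ + _).
rewrite (bigD1 (Ordinal (ltn_pmod x m_gt0))) //= eqxx andbT big1 ?addn0 // => i.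
by rewrite -val_eqE /= eq_sym => /negbTE ->; rewrite andbF.
Qed.

Lemma count_predD1 s (P : pred nat) y : uniq s -> y \in s -> P y ->
  count P s = (count (predI P (predC1 y)) s).+1.
Proof.
move=> us ys Py.
rewrite -size_filter -(count_predC (pred1 y) (filter P s)) !count_filter addnC -addn1.
congr (_ + _); first by apply: eq_count => z /=; rewrite andbC.
have <- : count (pred1 y) s = 1 by rewrite (count_uniq_mem y us) ys.
by apply: eq_count => z /=; case: eqP => // ->.
Qed.

Lemma count_le_image s t (P R : pred nat) (f : nat -> nat) :
  uniq s ->
  (forall x y, x \in s -> y \in s -> P x -> P y -> f x = f y -> x = y) ->
  (forall x, x \in s -> P x -> (f x \in t) && R (f x)) ->
  count P s <= count R t.
Proof.
move=> us f_inj fPR; rewrite -size_filter -(size_map f); apply: size_le_count.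
  rewrite map_inj_in_uniq ?filter_uniq // => x y.
  by rewrite !mem_filter => /andP[Px xs] /andP[Py ys]; apply: f_inj.
by move=> z /mapP[x]; rewrite mem_filter => /andP[Px xs] ->; apply: fPR.
Qed.

Lemma count_le_images2 s t (P Q R : pred nat) (f g : nat -> nat) :
  uniq s -> injective f -> injective g ->
  (forall x, x \in s -> P x -> (f x \in t) && R (f x)) ->
  (forall x, x \in s -> Q x -> (g x \in t) && R (g x)) ->
  (forall x y, x \in s -> y \in s -> P x -> Q y -> f x != g y) ->
  count P s + count Q s <= count R t.
Proof.
move=> us f_inj g_inj fPR gQR fg_disj.
have -> : count P s + count Q s = size (map f (filter P s) ++ map g (filter Q s)).
  by rewrite size_cat !size_map !size_filter.
apply: size_le_count.
  rewrite cat_uniq !map_inj_uniq ?filter_uniq //= andbT; apply/hasPn => z /mapP[y].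
  rewrite mem_filter => /andP[Qy ys] ->; apply/mapP => -[x].
  by rewrite mem_filter => /andP[Px xs] /esym/eqP; rewrite (negbTE (fg_disj x y xs ys Px Qy)).
move=> z; rewrite mem_cat => /orP[] /mapP[x]; rewrite mem_filter => /andP[? ?] ->.
  exact: fPR.
exact: gQR.
Qed.

Section Sumset.

Variables (s t : seq nat) (Bs X Y R : pred nat) (g : nat -> nat).
Hypothesis s_uniq : uniq s.
Hypothesis g_inj : injective g.
Hypothesis gBR : forall b, b \in s -> Bs b -> (g b \in t) && R (g b).
Hypothesis XYR : forall x y, x \in s -> y \in s -> X x -> Y y -> (x + y \in t) && R (x + y).
Hypothesis gXY :
  forall b x y, b \in s -> x \in s -> y \in s -> Bs b -> X x -> Y y -> g b != x + y.

(* [g @: Bs], [X + max Y] and [min X + (Y - max Y)] are disjoint in [R]. *)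
Lemma count_le_sumset_extremal mX MY :
  mX \in s -> X mX -> (forall x, x \in s -> X x -> mX <= x) ->
  MY \in s -> Y MY -> (forall y, y \in s -> Y y -> y <= MY) ->
  count Bs s + count X s + count Y s <= (count R t).+1.
Proof.
move=> mXs XmX mX_min MYs YMY MY_max.
set Y' := predI Y (predC1 MY).
have cY : count Y s = (count Y' s).+1 by exact: count_predD1.
set l1 := map g (filter Bs s).
set l2 := map (addn^~ MY) (filter X s).
set l3 := map (addn mX) (filter Y' s).
have -> : count Bs s + count X s + count Y s = (size (l1 ++ l2 ++ l3)).+1.
  by rewrite cY !size_cat !size_map !size_filter addnA addnS.
rewrite ltnS; apply: size_le_count.
  rewrite !cat_uniq !map_inj_uniq ?filter_uniq //; last 2 first.
  - by move=> x1 x2 /eqP; rewrite eqn_add2l => /eqP.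
  - by move=> x1 x2 /eqP; rewrite eqn_add2r => /eqP.
  rewrite /= andbT; apply/andP; split.
    rewrite has_cat negb_or; apply/andP; split; apply/hasPn => z /mapP[x].
      rewrite mem_filter => /andP[Xx xs] ->; apply/mapP => -[b].
      by rewrite mem_filter => /andP[Bb bs] /esym/eqP; apply/negP; exact: gXY.
    rewrite mem_filter => /andP[/andP[Yx _] xs] ->; apply/mapP => -[b].
    by rewrite mem_filter => /andP[Bb bs] /esym/eqP; apply/negP; exact: gXY.
  apply/hasPn => z /mapP[y]; rewrite mem_filter => /andP[/andP[Yy yM] ys] ->.
  apply/mapP => -[x]; rewrite mem_filter => /andP[Xx xs] /eqP.
  have y_lt : y < MY by rewrite ltn_neqAle -[y != MY]/(predC1 MY y) yM MY_max.
  have := leq_add (mX_min x xs Xx) y_lt.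
  by rewrite addnS ltn_neqAle => /andP[/negbTE ->].
move=> z; rewrite !mem_cat => /or3P[] /mapP[x]; rewrite mem_filter.
- by move=> /andP[Bx xs] ->; apply: gBR.
- by move=> /andP[Xx xs] ->; apply: XYR.
- by move=> /andP[/andP[Yx _] xs] ->; apply: XYR.
Qed.

Lemma count_le_sumset : 0 < count X s -> 0 < count Y s ->
  count Bs s + count X s + count Y s <= (count R t).+1.
Proof.
rewrite -!has_count => /hasP[x0 x0s Xx0] /hasP[y0 y0s Yy0].
have [mX /andP[mXs XmX] mX_min] : ex_minn_spec (fun x => (x \in s) && X x) _ :=
  ex_minnP (ex_intro _ x0 (introT andP (conj x0s Xx0))).
have s_bound y : (y \in s) && Y y -> y <= \max_(z <- s) z.
  by case/andP=> ys _; rewrite (big_rem y ys) leq_maxl.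
have [MY /andP[MYs YMY] MY_max] : ex_maxn_spec (fun y => (y \in s) && Y y) _ :=
  ex_maxnP (ex_intro _ y0 (introT andP (conj y0s Yy0))) s_bound.
apply: (count_le_sumset_extremal mXs XmX _ MYs YMY) => [x xs Xx|y ys Yy].
  by apply: mX_min; rewrite xs Xx.
by apply: MY_max; rewrite ys Yy.
Qed.

End Sumset.

Lemma residue_window_inj m c x y :
  0 < m -> c <= x -> c <= y -> x = y %[mod m] ->
  (x - c) %/ m = (y - c) %/ m -> x = y.
Proof.
move=> m_gt0 cx cy xy_mod eq_div.
wlog yx : x y cx cy xy_mod eq_div / y <= x.
  move=> hw; have [|/ltnW] := leqP y x; first exact: hw.
  by move=> xy; apply/esym/hw.
have dvd_m : m %| x - y by rewrite -eqn_mod_dvd // xy_mod.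
have lt_m : x - y < m.
  have := divn_eq (x - c) m; have := divn_eq (y - c) m.
  have := ltn_pmod (x - c) m_gt0; have := ltn_pmod (y - c) m_gt0.
  rewrite eq_div; move: ((y - c) %/ m * m) => q; clear -yx cx cy; lia.
have : x - y = 0.
  by apply/eqP; rewrite -leqn0 leqNgt; apply/negP => /dvdn_leq/(_ dvd_m); lia.
lia.
Qed.

Lemma count_residue_le s (P : pred nat) lo hi m r :
  uniq s -> 0 < m ->
  (forall x, x \in s -> P x -> (lo < x <= hi) && (x %% m == r)) ->
  m * count P s <= hi - lo + m - 1.
Proof.
move=> us m_gt0 P_win.
have [hi_le_lo|lo_lt_hi] := leqP hi lo.
  have -> : count P s = 0.
    apply/eqP; rewrite -leqn0 leqNgt -has_count; apply/hasP => -[x xs Px].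
    by move: (P_win x xs Px); lia.
  by rewrite muln0.
set q := (hi - lo.+1) %/ m.
have : count P s <= count predT (iota 0 q.+1).
  apply: (count_le_image (f := fun x => (x - lo.+1) %/ m)) => // [x y xs ys Px Py|x xs Px].
    case/andP: (P_win x xs Px) => /andP[lo_x _] /eqP x_r.
    case/andP: (P_win y ys Py) => /andP[lo_y _] /eqP y_r.
    by apply: residue_window_inj; rewrite ?x_r ?y_r.
  case/andP: (P_win x xs Px) => /andP[_ x_hi] _.
  by rewrite mem_iota ltnS leq_div2r //; lia.
rewrite count_predT size_iota -(leq_pmul2l m_gt0) => /leq_trans; apply.
have := leq_trunc_div (hi - lo.+1) m; rewrite mulnSr mulnC -/q; lia.
Qed.

Lemma count_AP_residue_ge b e r m : ~~ (3 %| e) -> r < 3 ->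
  m <= 3 * count (fun j => (b + j * e) %% 3 == r) (iota 0 m) + 2.
Proof.
move=> e3 r3; elim: m {-2}m (leqnn m) => [|N IH] m m_le; first lia.
have [m_le2|m_gt2] := leqP m 2; first lia.
have -> : m = (m - 3) + 3 by lia.
rewrite iotaD count_cat add0n.
have : 0 < count (fun j => (b + j * e) %% 3 == r) (iota (m - 3) 3).
  rewrite /= !mulSn; move: ((m - 3) * e) e3 => w; rewrite /dvdn; lia.
have := IH (m - 3); lia.
Qed.

End Counting.

Section PropertyP.

Variables (n : nat) (A : pred nat).
Hypothesis A_P : propP A.

Local Notation U := (U_set n A).
Local Notation s := (iota 1 n).
Local Notation U_mod m r := (fun x => U x && (x %% m == r)).

Lemma B_half_window b : B_half n A b -> n < 4 * b /\ 2 * b <= n.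
Proof. by case/and3P. Qed.

Lemma B_half_mul_neq_sum k b x y :
  B_half n A b -> A x -> A y -> n < 2 * x -> n < 2 * y -> k * b != x + y.
Proof.
rewrite /B_half => /and3P[_ _ /hasP[a _ /and4P[Aa a_gt0 a_le /existsP[p /eqP ab]]]].
move=> Ax Ay x_gt y_gt.
apply/eqP => kb; apply: A_P; exists x, y, a; split => //; split; try lia.
by rewrite -kb -ab mulnA dvdn_mull.
Qed.

Lemma U_residue_le m r : 0 < m ->
  m * count (U_mod m r) s <= n - n %/ 2 + m - 1.
Proof.
move=> m_gt0; apply: (count_residue_le (r := r)) => // [|x _ /andP[/and4P[_ x_gt x_le _] ->]].
  exact: iota_uniq.
by rewrite andbT; apply/andP; split; lia.
Qed.

Local Notation B2 := (B_half_mod3 n A 2).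

Lemma card_B2_even_U_le :
  6 * (count B2 s + count (fun x => U x && ~~ odd x) s) <= n - n %/ 2 + 5.
Proof.
set Pe := fun z => (n %/ 2 < z <= n) && (z %% 6 == 4).
have : count B2 s + count (fun x => U x && ~~ odd x) s <= count Pe s.
  apply: (count_le_images2 (f := muln 2) (g := id)) => //.
  - exact: iota_uniq.
  - by move=> ? ? /eqP; rewrite eqn_mul2l /= => /eqP.
  - move=> b _ /andP[/B_half_window[b_gt b_le] /eqP b_mod].
    by rewrite mem_iota /Pe; apply/and3P; split; lia.
  - move=> x xs /andP[/and4P[_ x_gt x_le /eqP x_mod] x_even].
    by rewrite xs /Pe; apply/andP; split; move: x_even; lia.
  - move=> b y _ _ /andP[Bb _] /andP[/and4P[Ay y_gt _ _] _] /=.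
    apply/eqP => eq_y; move/eqP: (B_half_mul_neq_sum 4 Bb Ay Ay y_gt y_gt); lia.
have : 6 * count Pe s <= n - n %/ 2 + 6 - 1.
  by apply: (count_residue_le (lo := n %/ 2) (r := 4)) => //; exact: iota_uniq.
lia.
Qed.

Lemma card_B2_odd_U_le :
  0 < count (U_mod 12 1) s ->
  0 < count (U_mod 12 7) s ->
  12 * (count B2 s + count (U_mod 12 1) s + count (U_mod 12 7) s) <= n + 23.
Proof.
set R8 := fun z => (n < z <= 2 * n) && (z %% 12 == 8).
move=> V1_gt0 V7_gt0.
have : count B2 s + count (U_mod 12 1) s + count (U_mod 12 7) s
       <= (count R8 (iota 1 (2 * n))).+1.
  apply: (count_le_sumset (g := muln 4)) => //.
  - exact: iota_uniq.
  - by move=> ? ? /eqP; rewrite eqn_mul2l /= => /eqP.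
  - move=> b _ /andP[/B_half_window[b_gt b_le] /eqP b_mod].
    by rewrite mem_iota /R8; apply/and3P; split; lia.
  - move=> x y _ _ /andP[/and4P[_ x_gt x_le _] /eqP x_mod] /andP[/and4P[_ y_gt y_le _] /eqP y_mod].
    by rewrite mem_iota /R8; apply/and3P; split; lia.
  - move=> b x y _ _ _ /andP[Bb _] /andP[/and4P[Ax x_gt _ _] _] /andP[/and4P[Ay y_gt _ _] _].
    exact: B_half_mul_neq_sum.
have : 12 * count R8 (iota 1 (2 * n)) <= 2 * n - n + 12 - 1.
  by apply: (count_residue_le (lo := n) (r := 8)) => //; exact: iota_uniq.
lia.
Qed.

Lemma card_U_parity_split :
  count U s = count (fun x => U x && ~~ odd x) s + count (U_mod 12 1) s + count (U_mod 12 7) s.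
Proof.
rewrite (count_split _ U (predC odd)) -addnA; congr (_ + _).
rewrite (count_split _ _ (fun x => x %% 12 == 1)); congr (_ + _); apply: eq_count => x /=.
  by case Ux: (U x) => //=; case/and4P: Ux => _ _ _ /eqP; lia.
by case Ux: (U x) => //=; case/and4P: Ux => _ _ _ /eqP; lia.
Qed.

Lemma card_B2_le : n + 36 <= 12 * count U s -> 12 * count B2 s + 6 * count U s <= n + 24.
Proof.
move=> U_large; have even_le := card_B2_even_U_le.
have V1_le := U_residue_le 1 (isT : 0 < 12); have V7_le := U_residue_le 7 (isT : 0 < 12).
have := card_U_parity_split.
have [V1_0|V1_gt0] := posnP (count (U_mod 12 1) s); first lia.
have [V7_0|V7_gt0] := posnP (count (U_mod 12 7) s); first lia.
have := card_B2_odd_U_le V1_gt0 V7_gt0; lia.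
Qed.

Section FiveMultiples.

Variable Bs : pred nat.
Hypothesis Bs_window : forall b, Bs b -> (n < 5 * b <= 5 * (n %/ 2)) && (5 * b %% 15 == 5).
Hypothesis Bs_avoid : forall b x y, Bs b -> U x -> U y -> 5 * b != x + y.

Local Notation R15 := (fun z => (n < z <= 5 * (n %/ 2)) && (z %% 15 == 5)).
Local Notation t := (iota 1 (5 * n)).

Lemma card_R15_le : 15 * count R15 t <= 5 * (n %/ 2) - n + 15 - 1.
Proof. by apply: (count_residue_le (lo := n) (r := 5)) => //; exact: iota_uniq. Qed.

Lemma mul5_R15 b : Bs b -> (5 * b \in t) && R15 (5 * b).
Proof. by move/Bs_window => b_win; rewrite mem_iota b_win andbT; lia. Qed.

Lemma card_Bs_le : count Bs s <= count R15 t.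
Proof.
apply: (count_le_image (f := muln 5)) => [|x y _ _ _ _ /eqP|x _ /mul5_R15] //.
  exact: iota_uniq.
by rewrite eqn_mul2l => /eqP.
Qed.

Lemma card_Bs_U_mod5_le i j : (i + j) %% 5 = 0 ->
  0 < count (U_mod 5 i) s -> 0 < count (U_mod 5 j) s ->
  count Bs s + count (U_mod 5 i) s + count (U_mod 5 j) s <= (count R15 t).+1.
Proof.
move=> ij_mod Ui_gt0 Uj_gt0.
apply: (count_le_sumset (g := muln 5)) => // [|x y /eqP|b _ /mul5_R15 //|x y _ _|b x y _ _ _ Bb].
- exact: iota_uniq.
- by rewrite eqn_mul2l => /eqP.
- move=> /andP[/and4P[_ x_gt x_le /eqP x3] /eqP x5] /andP[/and4P[_ y_gt y_le /eqP y3] /eqP y5].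
  rewrite mem_iota; apply/and3P; split; lia.
- by move=> /andP[Ux _] /andP[Uy _]; exact: Bs_avoid.
Qed.

Lemma card_U_mod5_le i r : r %% 3 = 1 -> r %% 5 = i -> r < 15 ->
  15 * count (U_mod 5 i) s <= n - n %/ 2 + 15 - 1.
Proof.
move=> r3 r5 r15; apply: (count_residue_le (lo := n %/ 2) (r := r)) => [|//|x _].
  exact: iota_uniq.
move=> /andP[/and4P[_ x_gt x_le /eqP x3] /eqP x5]; apply/andP; split; lia.
Qed.

Lemma card_five_multiples_le : n + 36 <= 12 * count U s ->
  10 * count Bs s + 4 * count U s <= n + 20.
Proof.
move=> U_large; have R15_le := card_R15_le; have Bs_le := card_Bs_le.
have := count_mod_partition s U (isT : 0 < 5); rewrite !big_ord_recr big_ord0 /=.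
have U0_le := @card_U_mod5_le 0 10 erefl erefl isT.
have U1_le := @card_U_mod5_le 1 1 erefl erefl isT.
have U2_le := @card_U_mod5_le 2 7 erefl erefl isT.
have U3_le := @card_U_mod5_le 3 13 erefl erefl isT.
have U4_le := @card_U_mod5_le 4 4 erefl erefl isT.
(* Classes [i] and [j] with [i + j = 0 mod 5] pair up; if a class is empty,
   [U_large] forces the other classes to be large enough. *)
have p00 : count Bs s + 2 * count (U_mod 5 0) s <= (count R15 t).+1.
  have [U0_0|U0_gt0] := posnP (count (U_mod 5 0) s); first lia.
  have := card_Bs_U_mod5_le (erefl : (0 + 0) %% 5 = 0) U0_gt0 U0_gt0; lia.
have [U1_0|U1_gt0] := posnP (count (U_mod 5 1) s);
have [U4_0|U4_gt0] := posnP (count (U_mod 5 4) s);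
have [U2_0|U2_gt0] := posnP (count (U_mod 5 2) s);
have [U3_0|U3_gt0] := posnP (count (U_mod 5 3) s);
try have p14 := card_Bs_U_mod5_le (erefl : (1 + 4) %% 5 = 0) U1_gt0 U4_gt0;
try have p23 := card_Bs_U_mod5_le (erefl : (2 + 3) %% 5 = 0) U2_gt0 U3_gt0; lia.
Qed.

End FiveMultiples.

Local Notation B1 := (B_half_mod3 n A 1).

Lemma card_B1_le : n + 36 <= 12 * count U s -> 10 * count B1 s + 4 * count U s <= n + 20.
Proof.
apply: card_five_multiples_le => [b /andP[/B_half_window[b_gt b_le] /eqP b3]|b x y /andP[Bb _]].
  by apply/andP; split; lia.
by case/and4P=> Ax x_gt _ _ /and4P[Ay y_gt _ _]; exact: B_half_mul_neq_sum.
Qed.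

Section APQuarters.

Variables (al d m : nat).
Hypothesis d_gt0 : 0 < d.
Hypothesis AP_sums : forall k, k < m -> sumset (A_top n A) (al + k * d) /\ 4 %| al + k * d.
Hypothesis m_large : n < 18 * (m - 1).

Definition AP_quarter b := [exists k : 'I_m, 4 * b == al + k * d].

Lemma AP_term_window k : k < m -> 4 * n < 3 * (al + k * d) /\ al + k * d <= 2 * n.
Proof.
by case/AP_sums=> -[x [y [/and3P[_ x_gt x_le] /and3P[_ y_gt y_le] <-]]] _; lia.
Qed.

Lemma AP_step_small : 4 %| al /\ d = 4 * (d %/ 4) /\ d < 12.
Proof.
have m_gt1 : 1 < m by lia.
have /AP_sums[_] := ltnW m_gt1; rewrite mul0n addn0 => al4.
have /AP_sums[_] := m_gt1; rewrite mul1n => ald4.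
have [_ last_le] := @AP_term_window m.-1 ltac:(lia).
have [first_gt _] := AP_term_window (ltnW m_gt1); rewrite mul0n addn0 in first_gt.
have d4 : 4 %| d by rewrite -(dvdn_addr _ al4).
split=> //; split; first by rewrite mulnC divnK.
rewrite ltnNge; apply/negP => d_ge.
have : (m.-1) * 12 <= (m.-1) * d by rewrite leq_mul2l d_ge orbT.
lia.
Qed.

Lemma AP_quarter_props b : AP_quarter b -> [/\ n < 3 * b, 2 * b <= n & ~~ B_half n A b].
Proof.
case/existsP=> k /eqP qb; have [gt le] := AP_term_window (ltn_ord k).
split; [lia|lia|apply/negP => Bb].
case: (AP_sums (ltn_ord k)) => -[x [y [/and3P[Ax x_gt _] /and3P[Ay y_gt _] xy]]] _.
by move/eqP: (B_half_mul_neq_sum 4 Bb Ax Ay ltac:(lia) ltac:(lia)); rewrite qb xy.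
Qed.

Lemma card_AP_quarters_mod3_ge :
  m <= 3 * count (fun b => AP_quarter b && (b %% 3 == 1)) s + 2.
Proof.
have [al4 [de d12]] := AP_step_small; set e := d %/ 4 in de.
have e3 : ~~ (3 %| e) by rewrite /dvdn; lia.
apply: (leq_trans (count_AP_residue_ge (al %/ 4) m e3 (isT : 1 < 3))).
rewrite leq_add2r leq_mul2l /=.
apply: (count_le_image (f := fun j => al %/ 4 + j * e)) => [|j j' _ _ _ _ /=|j].
- exact: iota_uniq.
- move=> eq_jj'; apply/eqP; rewrite -(eqn_pmul2r (_ : 0 < e)); lia.
rewrite mem_iota add0n => /andP[_ jm] j3.
have qj : AP_quarter (al %/ 4 + j * e).
  apply/existsP; exists (Ordinal jm); apply/eqP; rewrite /= de.
  by case/dvdnP: al4 => q ->; rewrite mulnK //; lia.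
have [j_gt j_le _] := AP_quarter_props qj.
by rewrite qj j3 mem_iota; apply/andP; split; lia.
Qed.

Lemma card_B1_AP_le : n + 36 <= 12 * count U s -> count (A_top n A) s <= 2 * m + 2 ->
  90 * count B1 s + 36 * count U s + 15 * count (A_top n A) s <= 11 * n + 360.
Proof.
move=> U_large T_le; have m_le := card_AP_quarters_mod3_ge.
set F := fun b => AP_quarter b && (b %% 3 == 1) in m_le.
set F_hi := predI F (fun b => 2 * n < 5 * b).
have := count_split s F (fun b => 2 * n < 5 * b); rewrite -/F_hi => F_split.
have F_lo_le : 3 * count (predI F (predC (fun b => 2 * n < 5 * b))) s
               <= (2 * n) %/ 5 - n %/ 3 + 3 - 1.
  apply: (count_residue_le (r := 1)) => [|//|b _ /andP[/andP[/AP_quarter_props[b_gt _ _] ->]]].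
    exact: iota_uniq.
  by rewrite andbT /= -leqNgt => b_le; apply/andP; split; lia.
have disj : count (predI B1 F_hi) s = 0.
  apply/eqP; rewrite -leqn0 leqNgt -has_count; apply/hasP => -[b _ /andP[/andP[Bb _]]].
  by case/andP=> /andP[/AP_quarter_props[_ _ /negP]].
have := count_predUI B1 F_hi s; rewrite disj addn0 => cU.
have five : 10 * (count B1 s + count F_hi s) + 4 * count U s <= n + 20.
  rewrite -cU; apply: card_five_multiples_le U_large.
  - move=> b /orP[/andP[/B_half_window[b_gt b_le] /eqP b3]|].
      by apply/andP; split; lia.
    by case/andP=> /andP[/AP_quarter_props[b_gt b_le _] /eqP b3] b_hi; apply/andP; split; lia.
  - move=> b x y /orP[/andP[Bb _]|/andP[_ b_hi]] /and4P[Ax x_gt x_le _] /and4P[Ay y_gt y_le _].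
      exact: B_half_mul_neq_sum.
    by apply/eqP; lia.
lia.
Qed.

End APQuarters.

End PropertyP.

Unset Implicit Arguments.
Import Order.TTheory GRing.Theory Num.Theory.
Local Open Scope ring_scope.

Theorem mainTheorem18 (n : nat) (A : pred nat) :
  subset_n n A -> propP A ->
  (card_n n (U_set n A))%:R >= (n%:R / 12 + 3 : rat) ->
  [/\ (card_n n (B_half_mod3 n A 2))%:R
        <= (n%:R / 12 + 2 - (card_n n (U_set n A))%:R / 2 : rat),
      (card_n n (B_half_mod3 n A 1))%:R
        <= (n%:R / 10 + 2 - 2 * (card_n n (U_set n A))%:R / 5 : rat)
    & (exists m : nat,
          (m%:R >= (card_n n (A_top n A))%:R / 2 - 1 :> rat) /\
          contains_AP (fun s => sumset (A_top n A) s /\ (4 %| s)%N) m) ->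
      (card_n n (A_top n A))%:R <= (n%:R / 9 + 4 : rat) \/
      (card_n n (B_half_mod3 n A 1))%:R
        <= (11 * n%:R / 90 + 4 - 2 * (card_n n (U_set n A))%:R / 5
            - (card_n n (A_top n A))%:R / 6 : rat)].
Proof.
rewrite /card_n => _ A_P U_ge.
have U_large : (n + 36 <= 12 * count (U_set n A) (iota 1 n))%N.
  by rewrite -(ler_nat rat) !natrD; lra.
split.
- have := card_B2_le A_P U_large; rewrite -(ler_nat rat) !natrD => ?; lra.
- have := card_B1_le A_P U_large; rewrite -(ler_nat rat) !natrD => ?; lra.
- move=> [m [m_ge [al [d [d_gt0 AP_sums]]]]].
  have [T_le|T_gt] := lerP (count (A_top n A) (iota 1 n))%:R (n%:R / 9 + 4 : rat).
    by left.
  right.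
  have T_le_m : (count (A_top n A) (iota 1 n) <= 2 * m + 2)%N.
    by rewrite -(ler_nat rat) !natrD; lra.
  have T_large : (n + 36 < 9 * count (A_top n A) (iota 1 n))%N.
    by rewrite -(ltr_nat rat) !natrD; lra.
  have m_large : (n < 18 * (m - 1))%N by lia.
  have := card_B1_AP_le A_P d_gt0 AP_sums m_large U_large T_le_m.
  rewrite -(ler_nat rat) !natrD => ?; lra.
Qed.
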